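(* Let $A$ be a convex $m\times n$ $(0,1)$-matrix in which every row sum and every column sum is at least $2$. Then $A$ permits an interchange resulting in another convex $m\times n$ $(0,1)$-matrix $B$ if and only if there are indices $1\le a<b\le m$ and $1\le c<d\le n$ such that, with $k=b-a+1$ and $l=d-c+1$: (i) the submatrix of $A$ in rows $a,\dots,b$ and columns $c,\dots,d$ equals $J^1_{k,l}$ or $J^2_{k,l}$; (ii) in rows $a$ and $b$, all entries of $A$ outside columns $c,\dots,d$ are $0$; (iii) in columns $c$ and $d$, all entries of $A$ outside rows $a,\dots,b$ are $0$.
   Context: A $(0,1)$-matrix is convex if in every row and every column the 1's occur consecutively. An interchange replaces a $2\times 2$ submatrix (in rows $i<i'$ and columns $j<j'$) equal to $\begin{bmatrix}1&0\\0&1\end{bmatrix}$ by $\begin{bmatrix}0&1\\1&0\end{bmatrix}$ or vice versa; it preserves row and column sums. $J_{k,l}$ is the $k\times l$ all-ones matrix; $J^1_{k,l}$ is obtained from $J_{k,l}$ by replacing the entries in positions $(1,1)$ and $(k,l)$ by $0$, and $J^2_{k,l}$ is obtained from $J_{k,l}$ by replacing the entries in positions $(1,l)$ and $(k,1)$ by $0$. *)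

(* (0,1)-matrices are 'M[bool]_(m, n) (true = 1, false = 0).
   Indices are 0-based ('I_m, 'I_n). *)
From mathcomp Require Import all_boot all_order all_algebra.
Set Implicit Arguments. Unset Strict Implicit. Unset Printing Implicit Defensive.

Definition convex_mx m n (A : 'M[bool]_(m, n)) : Prop :=
  (forall (i : 'I_m) (j1 j2 j3 : 'I_n),
      j1 <= j2 <= j3 -> A i j1 -> A i j3 -> A i j2) /\
  (forall (j : 'I_n) (i1 i2 i3 : 'I_m),
      i1 <= i2 <= i3 -> A i1 j -> A i3 j -> A i2 j).

Definition row_sum m n (A : 'M[bool]_(m, n)) (i : 'I_m) : nat :=
  #|[set j : 'I_n | A i j]|.
Definition col_sum m n (A : 'M[bool]_(m, n)) (j : 'I_n) : nat :=
  #|[set i : 'I_m | A i j]|.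

Definition mx_interchange m n (A B : 'M[bool]_(m, n)) : Prop :=
  exists (i i' : 'I_m) (j j' : 'I_n),
    [/\ i < i', j < j',
        (A i j && ~~ A i j' && ~~ A i' j && A i' j') ||
        (~~ A i j && A i j' && A i' j && ~~ A i' j') &
        forall (x : 'I_m) (y : 'I_n),
          B x y = if ((x == i) || (x == i')) && ((y == j) || (y == j'))
                  then ~~ A x y else A x y].

Definition block_J1 m n (A : 'M[bool]_(m, n)) (a b : 'I_m) (c d : 'I_n) : Prop :=
  forall (i : 'I_m) (j : 'I_n), a <= i <= b -> c <= j <= d ->
    A i j = ~~ (((i == a) && (j == c)) || ((i == b) && (j == d))).

Definition block_J2 m n (A : 'M[bool]_(m, n)) (a b : 'I_m) (c d : 'I_n) : Prop :=
  forall (i : 'I_m) (j : 'I_n), a <= i <= b -> c <= j <= d ->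
    A i j = ~~ (((i == a) && (j == d)) || ((i == b) && (j == c))).

From mathcomp Require Import all_boot all_order all_algebra.
From mathcomp Require Import zify.
Set Implicit Arguments. Unset Strict Implicit. Unset Printing Implicit Defensive.

(* Let the interchange act on rows a < b and columns c < d.  A row of A
   through two corners is a convex line with at least two 1's that stays
   convex when its two corner entries are complemented; this forces its
   support to be the segment from one corner to the other, containing exactly
   the corner carrying a 1.  The same holds for the two columns, so rows a, b
   and columns c, d of A form a frame of half-open segments.  Convexity fills
   the inside of the frame with 1's, which gives J^1 or J^2, and the segments
   vanish outside the box, which gives (ii) and (iii).  Conversely, the
   interchange turns such a frame into the frame of opposite orientation,
   whose sides are again segments, so the result is convex. *)

(* [lia] does not see through equalities of ordinals: state them on [nat]. *)
Ltac ord_lia :=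
  repeat match goal with H : context [@eq_op _ _ _] |- _ => revert H end;
  rewrite -?(inj_eq val_inj) /=; intros; lia.

Definition half_interval (t : bool) (lo hi x : nat) : bool :=
  if t then lo < x <= hi else lo <= x < hi.

Section ConvexLine.

Variable n : nat.
Implicit Types f g : 'I_n -> bool.

Definition convex_line f :=
  forall j1 j2 j3 : 'I_n, j1 <= j2 <= j3 -> f j1 -> f j3 -> f j2.

Definition flip2 (j j' : 'I_n) f (y : 'I_n) : bool :=
  if (y == j) || (y == j') then ~~ f y else f y.

Lemma eq_convex_line f g : convex_line f -> f =1 g -> convex_line g.
Proof. by move=> cf fg j1 j2 j3; rewrite -!fg; apply: cf. Qed.

Lemma half_interval_convex t (lo hi : nat) :
  convex_line (fun y => half_interval t lo hi y).
Proof. by move=> j1 j2 j3; rewrite /half_interval; case: t; lia. Qed.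

Lemma flip2_half_interval t (j j' : 'I_n) : j < j' ->
  flip2 j j' (fun y => half_interval t j j' y) =1
  (fun y => half_interval (~~ t) j j' y).
Proof.
by move=> jj' y; rewrite /flip2 /half_interval; case: t; case: ifP; ord_lia.
Qed.

Lemma flip2_convex_support f g (j j' : 'I_n) :
  convex_line f -> convex_line g -> j < j' -> g =1 flip2 j j' f ->
  f j -> ~~ f j' -> (exists2 y, y != j & f y) ->
  f =1 fun y => j <= y < j'.
Proof.
move=> cf cg jj' gE fj nfj' [y0 y0j fy0].
have gfE y : y != j -> y != j' -> g y = f y.
  by move=> /negbTE yj /negbTE yj'; rewrite gE /flip2 yj yj'.
have gj' : g j' by rewrite gE /flip2 eqxx orbT.
(* A 1 of f left of j would surround the 0 of g at j by 1's; a 1 of f right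
   of j' would surround the 0 of f at j'. *)
have f_ge y : f y -> j <= y.
  move=> fy; rewrite leqNgt; apply/negP => yj.
  have : g j by apply: (cg y j j') => //; [ord_lia | rewrite gfE //; ord_lia].
  by rewrite gE /flip2 eqxx fj.
have f_lt y : f y -> y < j'.
  move=> fy; rewrite ltnNge; apply/negP => jy.
  by apply: (negP nfj'); apply: (cf j j' y) => //; ord_lia.
have y0_in : j < y0 < j' by move: (f_ge _ fy0) (f_lt _ fy0); ord_lia.
move=> y; apply/idP/idP => [fy | jyj']; first by rewrite f_ge ?f_lt.
have [yy0 | y0y] := leqP y y0; first by apply: (cf j y y0) => //; ord_lia.
rewrite -gfE; try ord_lia.
by apply: (cg y0 y j') => //; [ord_lia | rewrite gfE //; ord_lia].
Qed.

Lemma flip2_convex_half_interval f g (j j' : 'I_n) :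
  convex_line f -> convex_line g -> j < j' -> g =1 flip2 j j' f ->
  2 <= #|[set y | f y]| -> f j != f j' ->
  f =1 fun y => half_interval (~~ f j) j j' y.
Proof.
move=> cf cg jj' gE f2 fjj'.
have other y0 : exists2 y, y != y0 & f y.
  have /card_gt1P[x [y [+ + xy]]] := f2; rewrite !inE => fx fy.
  have [xy0 | ] := eqVneq x y0; last by exists x.
  by exists y; rewrite // -xy0 eq_sym.
move: fjj'; case fj: (f j); case fj': (f j') => // _.
  have fE := flip2_convex_support cf cg jj' gE fj (negbT fj') (other j).
  by move=> y; rewrite fE.
have fE y : f y = flip2 j j' g y.
  by rewrite /flip2 gE /flip2; case: ifP => /= ->; rewrite ?negbK.
have gj : g j by rewrite gE /flip2 eqxx fj.
have ngj' : ~~ g j' by rewrite gE /flip2 eqxx orbT fj'.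
have [y1 y1j' fy1] := other j'.
have y1j : y1 != j by apply: contraTneq fy1 => ->; rewrite fj.
have gE' : g =1 fun y => j <= y < j'.
  apply: flip2_convex_support cg cf jj' fE gj ngj' _.
  by exists y1; rewrite // gE /flip2 (negbTE y1j) (negbTE y1j').
by move=> y; rewrite fE /flip2 gE' /half_interval /=; case: ifP; ord_lia.
Qed.

End ConvexLine.

Arguments half_interval_convex {n} t lo hi.

Section InterchangeFrame.

Variables m n : nat.
Implicit Types (A B : 'M[bool]_(m, n)) (a b : 'I_m) (c d : 'I_n).

(* [t = true] is the orientation of J^1 (zeros at the corners (a,c) and
   (b,d)), [t = false] that of J^2. *)
Definition interchange_frame A a b c d (t : bool) : Prop :=
  [/\ forall y, A a y = half_interval t c d y,
      forall y, A b y = half_interval (~~ t) c d y,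
      forall x, A x c = half_interval t a b x &
      forall x, A x d = half_interval (~~ t) a b x].

Lemma convex_interchange_frame A B :
  convex_mx A -> (forall i, 2 <= row_sum A i) -> (forall j, 2 <= col_sum A j) ->
  mx_interchange A B -> convex_mx B ->
  exists a b c d t, [/\ a < b, c < d & interchange_frame A a b c d t].
Proof.
move=> [Arow Acol] rs cs [a [b [c [d [ab cd corners BE]]]]] [Brow Bcol].
have [Aad Abc Abd] : [/\ A a d = ~~ A a c, A b c = ~~ A a c & A b d = A a c].
  by move: corners; case: (A a c); case: (A a d); case: (A b c); case: (A b d).
have rowE i : (i == a) || (i == b) -> A i c != A i d ->
    A i =1 fun y => half_interval (~~ A i c) c d y.
  move=> iab; apply: flip2_convex_half_interval (Arow i) (Brow i) cd _ (rs i).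
  by move=> y; rewrite BE /flip2 iab.
have colE j : (j == c) || (j == d) -> A a j != A b j ->
    (fun x => A x j) =1 fun x => half_interval (~~ A a j) a b x.
  move=> jcd; apply: flip2_convex_half_interval (Acol j) (Bcol j) ab _ (cs j).
  by move=> x; rewrite BE /flip2 jcd andbT.
exists a, b, c, d, (~~ A a c); split => //; split.
- by apply: rowE; rewrite ?eqxx // Aad; case: (A a c).
- by rewrite -Abc; apply: rowE; rewrite ?eqxx ?orbT // Abc Abd; case: (A a c).
- by apply: colE; rewrite ?eqxx // Abc; case: (A a c).
- by rewrite -Aad; apply: colE; rewrite ?eqxx ?orbT // Aad Abd; case: (A a c).
Qed.

Lemma interchange_frame_convex A a b c d t :
  convex_mx A -> a < b -> c < d -> interchange_frame A a b c d t ->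
  exists B, mx_interchange A B /\ convex_mx B.
Proof.
move=> [Arow Acol] ab cd [Aa Ab Ac Ad].
pose B := (\matrix_(x, y) if ((x == a) || (x == b)) && ((y == c) || (y == d))
                          then ~~ A x y else A x y)%R.
have BE x y : B x y = if ((x == a) || (x == b)) && ((y == c) || (y == d))
                      then ~~ A x y else A x y.
  by rewrite mxE.
exists B; split.
  exists a, b, c, d; split => //.
  by rewrite !Aa !Ab /half_interval; case: t {Aa Ab Ac Ad}; ord_lia.
have Ba y : B a y = half_interval (~~ t) c d y.
  by rewrite -(flip2_half_interval t cd) /flip2 BE eqxx -Aa.
have Bb y : B b y = half_interval t c d y.
  by rewrite -[t]negbK -(flip2_half_interval (~~ t) cd) /flip2 BE eqxx orbT -Ab.
have Bc x : B x c = half_interval (~~ t) a b x.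
  by rewrite -(flip2_half_interval t ab) /flip2 BE eqxx andbT -Ac.
have Bd x : B x d = half_interval t a b x.
  rewrite -[t]negbK -(flip2_half_interval (~~ t) ab).
  by rewrite /flip2 BE eqxx orbT andbT -Ad.
split => [i | j]; [change (convex_line (B i)) | change (convex_line (B^~ j))].
  have [-> | ia] := eqVneq i a.
    by apply: eq_convex_line (half_interval_convex _ c d) _ => y; rewrite Ba.
  have [-> | ib] := eqVneq i b.
    by apply: eq_convex_line (half_interval_convex _ c d) _ => y; rewrite Bb.
  apply: (eq_convex_line (Arow i : convex_line (A i))) => y.
  by rewrite BE (negbTE ia) (negbTE ib).
have [-> | jc] := eqVneq j c.
  by apply: eq_convex_line (half_interval_convex _ a b) _ => x; rewrite Bc.
have [-> | jd] := eqVneq j d.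
  by apply: eq_convex_line (half_interval_convex _ a b) _ => x; rewrite Bd.
apply: (eq_convex_line (Acol j : convex_line (A^~ j))) => x.
by rewrite BE (negbTE jc) (negbTE jd) andbF.
Qed.

Lemma interchange_frameP A a b c d :
  convex_mx A -> a < b -> c < d ->
  (exists t, interchange_frame A a b c d t) <->
  [/\ block_J1 A a b c d \/ block_J2 A a b c d,
      (forall j : 'I_n, ~~ (c <= j <= d) -> A a j = false /\ A b j = false) &
      (forall i : 'I_m, ~~ (a <= i <= b) -> A i c = false /\ A i d = false)].
Proof.
move=> [Arow _] ab cd; split => [[t [Aa Ab Ac Ad]] | [J zero_row zero_col]].
- have inside (x : 'I_m) (y : 'I_n) : a < x < b -> c <= y <= d -> A x y.
    move=> axb cyd; apply: (Arow x c y d) => //; rewrite ?Ac ?Ad /half_interval;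
      by case: t {Aa Ab Ac Ad}; ord_lia.
  split.
  + case: t {Ac Ad} Aa Ab inside => Aa Ab inside; [left | right];
      move=> x y axb cyd; rewrite /half_interval /= in Aa Ab;
      (have [-> | xa] := eqVneq x a; [rewrite Aa | have [-> | xb] := eqVneq x b;
        [rewrite Ab | rewrite inside]]); ord_lia.
  + move=> y ycd; rewrite Aa Ab /half_interval.
    by case: t {Aa Ab Ac Ad}; split; ord_lia.
  + move=> x xab; rewrite Ac Ad /half_interval.
    by case: t {Aa Ab Ac Ad}; split; ord_lia.
- case: J => J; [exists true | exists false]; split => [y | y | x | x].
  all: first
    [ have [inside | outside] := boolP (c <= y <= d);
        [rewrite J | have [Aay Aby] := zero_row y outside; rewrite ?Aay ?Aby]
    | have [inside | outside] := boolP (a <= x <= b);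
        [rewrite J | have [Axc Axd] := zero_col x outside; rewrite ?Axc ?Axd] ].
  all: rewrite /half_interval; ord_lia.
Qed.

End InterchangeFrame.

Theorem mainTheorem8 (m n : nat) (A : 'M[bool]_(m, n)) :
  convex_mx A ->
  (forall i : 'I_m, 2 <= row_sum A i) ->
  (forall j : 'I_n, 2 <= col_sum A j) ->
  ((exists B : 'M[bool]_(m, n), mx_interchange A B /\ convex_mx B) <->
   (exists (a b : 'I_m) (c d : 'I_n),
      [/\ a < b, c < d,
          block_J1 A a b c d \/ block_J2 A a b c d,
          (forall j : 'I_n, ~~ (c <= j <= d) -> A a j = false /\ A b j = false) &
          (forall i : 'I_m, ~~ (a <= i <= b) -> A i c = false /\ A i d = false)])).
Proof.
move=> convA rs cs; split => [[B [AB convB]] | [a [b [c [d [ab cd J zr zc]]]]]].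
  have [a [b [c [d [t [ab cd frame]]]]]] := convex_interchange_frame convA rs cs AB convB.
  have [J zr zc] := (interchange_frameP convA ab cd).1 (ex_intro _ t frame).
  by exists a, b, c, d.
have [t frame] := (interchange_frameP convA ab cd).2 (And3 J zr zc).
exact: interchange_frame_convex convA ab cd frame.
Qed.
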